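(* Let $R_*\in(0,\pi)$ be the unique solution in $(0,\pi)$ of $R=(\sin R)(2-\cos R)$, and let $R\in[R_*,\pi]$. Then, with $\widehat W_R(\ell)=\frac{2}{\pi\ell^3}(\ell R-\sin(\ell R))$, $$\widehat W_R(\ell)\le\frac{\widehat W_R(1)}{\ell}\qquad\text{for all integers }\ell\ge1,$$ and the inequality is strict for every $\ell\ge3$.
   Context: $\widehat W_R(\ell)$ is the $\ell$-th Fourier coefficient $\int_{\mathbb T}W_R(\theta)e^{-2\pi i\ell\theta}d\theta$ of the Hegselmann--Krause interaction $W_R(\theta)=(R-2\pi|\theta|)_+^2$ on $\mathbb T=[-\frac12,\frac12)$, for $R\in[0,\pi]$. *)

From Stdlib Require Import Reals.
Open Scope R_scope.

(* Closed form of the l-th Fourier coefficient of the Hegselmann--Krause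
   interaction W_r(theta) = (r - 2 pi |theta|)_+^2 on T = [-1/2,1/2),
   for r in [0,pi] and l >= 1:
     What r l = 2/(pi l^3) (l r - sin (l r)). *)
Definition What (r l : R) : R := 2 / (PI * l ^ 3) * (l * r - sin (l * r)).

(* After dividing by the positive factor 2 / (PI l^3), the claim reads
   l r - sin (l r) <= l^2 (r - sin r).  For l = 2 this is exactly
   r >= sin r (2 - cos r), i.e. the defect x - sin x (2 - cos x) is
   nonnegative at r; on [R*, PI] this holds because R* is the only zero of
   the defect in (0, PI) and the defect is positive at PI.  The defect is
   negative at 2, so R* > 2, and for r >= 2 and l >= 3 the crude bounds
   sin (l r) >= -1 and l^2 >= 3 l already give the strict inequality. *)
From Stdlib Require Import Reals Lra Lia.
Open Scope R_scope.

Lemma IVT_open (f : R -> R) (a b : R) :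
  continuity f -> a < b -> f a < 0 -> 0 < f b ->
  exists c, a < c < b /\ f c = 0.
Proof.
  intros hf hab ha hb.
  destruct (IVT f a b hf hab ha hb) as [c [hcab hc]].
  assert (c <> a) by (intros ->; lra).
  assert (c <> b) by (intros ->; lra).
  exists c; split; [lra|exact hc].
Qed.

Lemma sin_1_cos_1_lower_bound : 0.84 <= sin 1 /\ 0.54 <= cos 1.
Proof.
  assert (hpi2 := PI2_1).
  destruct (SIN 1) as [hsin _]; try lra.
  destruct (COS 1) as [hcos _]; try lra.
  unfold sin_lb, cos_lb, sin_approx, cos_approx, sum_f_R0 in *; simpl in *.
  assert (sin_taylor : sin_term 1 0 + sin_term 1 1 + sin_term 1 2 + sin_term 1 3
                       = 4241 / 5040) by (unfold sin_term; simpl; field).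
  assert (cos_taylor : cos_term 1 0 + cos_term 1 1 + cos_term 1 2 + cos_term 1 3
                       = 389 / 720) by (unfold cos_term; simpl; field).
  split; lra.
Qed.

Definition defect (x : R) : R := x - sin x * (2 - cos x).

Lemma continuity_defect : continuity defect.
Proof.
  unfold defect.
  apply continuity_minus; [exact (derivable_continuous id derivable_id)|].
  apply continuity_mult; [exact continuity_sin|].
  apply continuity_minus; [apply continuity_const; now intros|exact continuity_cos].
Qed.

Lemma defect_2_lt0 : defect 2 < 0.
Proof.
  destruct sin_1_cos_1_lower_bound as [hs hc]. unfold defect.
  assert (hsin2 : sin 2 = 2 * sin 1 * cos 1)
    by (rewrite <- sin_2a; f_equal; ring).
  assert (hcos2 : cos 2 = 1 - 2 * sin 1 * sin 1)
    by (rewrite <- cos_2a_sin; f_equal; ring).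
  rewrite hsin2, hcos2.
  assert (0.84 * 0.54 <= sin 1 * cos 1) by nra.
  assert (0.84 * 0.84 <= sin 1 * sin 1) by nra.
  nra.
Qed.

Lemma defect_PI_gt0 : 0 < defect PI.
Proof. unfold defect. rewrite sin_PI. assert (hpi := PI_RGT_0). lra. Qed.

Section UniqueRoot.

Variable Rs : R.
Hypothesis Rs_unique :
  forall x : R, 0 < x < PI -> x = sin x * (2 - cos x) -> x = Rs.

Let defect_root (x : R) : 0 < x < PI -> defect x = 0 -> x = Rs.
Proof. intros hx h0. apply Rs_unique; [exact hx|unfold defect in h0; lra]. Qed.

Lemma two_lt_Rs : 2 < Rs.
Proof.
  assert (hpi2 := PI2_1).
  destruct (IVT_open defect 2 PI continuity_defect) as [c [hc h0]];
    [lra|exact defect_2_lt0|exact defect_PI_gt0|].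
  rewrite <- (defect_root c); lra.
Qed.

Lemma defect_ge0_between_Rs_PI (r : R) : Rs <= r <= PI -> 0 <= defect r.
Proof.
  intros hr. assert (hRs := two_lt_Rs).
  destruct (Rle_or_lt 0 (defect r)) as [h|h]; [exact h|exfalso].
  destruct (Req_dec r PI) as [->|hrPI]; [pose proof defect_PI_gt0; lra|].
  destruct (IVT_open defect r PI continuity_defect) as [c [hc h0]];
    [lra|exact h|exact defect_PI_gt0|].
  assert (c = Rs) by (apply defect_root; [lra|exact h0]).
  lra.
Qed.

End UniqueRoot.

Lemma What1_div (r l : R) :
  0 < l -> What r 1 / l = 2 / (PI * l ^ 3) * (l ^ 2 * (r - sin r)).
Proof.
  intros hl. unfold What. rewrite !Rmult_1_l.
  assert (hpi := PI_RGT_0). field. lra.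
Qed.

Lemma What_coef_gt0 (l : R) : 0 < l -> 0 < 2 / (PI * l ^ 3).
Proof.
  intros hl. apply Rdiv_lt_0_compat; [lra|].
  apply Rmult_lt_0_compat; [exact PI_RGT_0|now apply pow_lt].
Qed.

Lemma What_le_What1_div (r l : R) : 0 < l ->
  l * r - sin (l * r) <= l ^ 2 * (r - sin r) -> What r l <= What r 1 / l.
Proof.
  intros hl h. rewrite What1_div by exact hl.
  apply Rmult_le_compat_l; [now apply Rlt_le, What_coef_gt0|exact h].
Qed.

Lemma What_lt_What1_div (r l : R) : 0 < l ->
  l * r - sin (l * r) < l ^ 2 * (r - sin r) -> What r l < What r 1 / l.
Proof.
  intros hl h. rewrite What1_div by exact hl.
  apply Rmult_lt_compat_l; [now apply What_coef_gt0|exact h].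
Qed.

Lemma double_harmonic_le (r : R) :
  0 <= defect r -> 2 * r - sin (2 * r) <= 2 ^ 2 * (r - sin r).
Proof. unfold defect. rewrite sin_2a. nra. Qed.

Lemma high_harmonic_lt (r l : R) :
  2 <= r -> 3 <= l -> l * r - sin (l * r) < l ^ 2 * (r - sin r).
Proof.
  intros hr hl.
  assert (hsin_lr := SIN_bound (l * r)).
  assert (hsin_r := SIN_bound r).
  assert (hgap : 1 <= 2 * r - 3 * sin r) by lra.
  assert (hsq : 3 * l * (r - sin r) <= l ^ 2 * (r - sin r)).
  { assert (0 <= l * (l - 3) * (r - sin r)).
    { apply Rmult_le_pos; [apply Rmult_le_pos|]; lra. }
    simpl; nra. }
  nra.
Qed.

Theorem lemma3p4 (Rs r : R)
  (hRs : 0 < Rs < PI)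
  (hRs_eq : Rs = sin Rs * (2 - cos Rs))
  (hRs_uniq : forall x : R, 0 < x < PI -> x = sin x * (2 - cos x) -> x = Rs)
  (hr : Rs <= r <= PI) :
  (forall l : nat, (1 <= l)%nat -> What r (INR l) <= What r 1 / INR l) /\
  (forall l : nat, (3 <= l)%nat -> What r (INR l) < What r 1 / INR l).
Proof.
  assert (hr2 : 2 <= r) by (pose proof (two_lt_Rs Rs hRs_uniq); lra).
  assert (hdef := defect_ge0_between_Rs_PI Rs hRs_uniq r hr).
  assert (hhigh : forall l : nat, (3 <= l)%nat ->
            INR l * r - sin (INR l * r) < INR l ^ 2 * (r - sin r)).
  { intros l hl. apply high_harmonic_lt; [exact hr2|].
    replace 3 with (INR 3) by (simpl; ring). now apply le_INR. }
  split; intros l hl.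
  - apply What_le_What1_div; [apply lt_0_INR; lia|].
    destruct l as [|[|[|l]]]; [lia| | |].
    + change (INR 1) with 1. rewrite Rmult_1_l, pow1. lra.
    + replace (INR 2) with 2 by (simpl; ring). now apply double_harmonic_le.
    + apply Rlt_le, hhigh. lia.
  - apply What_lt_What1_div; [apply lt_0_INR; lia|]. now apply hhigh.
Qed.
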